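(* Let $q_1,\dots,q_5\in\widehat{\mathbb H}$ be five distinct points and let $q'_1,\dots,q'_5\in\widehat{\mathbb H}$ be five distinct points. Then there exists a fractional linear transformation $T$ with $T(q_n)=q'_n$ for $n=1,\dots,5$ if and only if there exists $a\in\mathbb H^\times$ such that $$Q(q'_1,q'_2,q'_3,q'_4)=aQ(q_1,q_2,q_3,q_4)a^{-1}\quad\text{and}\quad Q(q'_1,q'_2,q'_3,q'_5)=aQ(q_1,q_2,q_3,q_5)a^{-1}.$$
   Context: $\mathbb H$ denotes the quaternions, $\mathbb H^\times=\mathbb H\setminus\{0\}$, $\widehat{\mathbb H}=\mathbb H\cup\{\infty\}$. A fractional linear transformation of $\widehat{\mathbb H}$ is a map $q\mapsto(aq+b)(cq+d)^{-1}$ with $\begin{pmatrix}a&b\\c&d\end{pmatrix}\in GL(2,\mathbb H)$. For four distinct points the cross-ratio is $Q(q_1,q_2,q_3,q_4)=(q_2-q_1)^{-1}(q_4-q_1)(q_4-q_3)^{-1}(q_2-q_3)$, defined by taking limits if some $q_n=\infty$. *)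

From HB Require Import structures.
From mathcomp Require Import all_boot all_order all_algebra.
From mathcomp Require Import reals.
Set Implicit Arguments. Unset Strict Implicit. Unset Printing Implicit Defensive.
Import Order.TTheory GRing.Theory Num.Theory.
Local Open Scope ring_scope.

Section Quat.
Variable R : realType.

Record quat := Quat { qr : R; qi : R; qj : R; qk : R }.

Definition q0 : quat := Quat 0 0 0 0.
Definition q1 : quat := Quat 1 0 0 0.
Definition qadd (x y : quat) : quat :=
  Quat (qr x + qr y) (qi x + qi y) (qj x + qj y) (qk x + qk y).
Definition qopp (x : quat) : quat := Quat (- qr x) (- qi x) (- qj x) (- qk x).
Definition qsub (x y : quat) : quat := qadd x (qopp y).
Definition qmul (x y : quat) : quat :=
  Quat (qr x * qr y - qi x * qi y - qj x * qj y - qk x * qk y)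
       (qr x * qi y + qi x * qr y + qj x * qk y - qk x * qj y)
       (qr x * qj y - qi x * qk y + qj x * qr y + qk x * qi y)
       (qr x * qk y + qi x * qj y - qj x * qi y + qk x * qr y).
Definition qnorm2 (x : quat) : R := qr x ^+ 2 + qi x ^+ 2 + qj x ^+ 2 + qk x ^+ 2.
(* multiplicative inverse, with the harmless convention 0^-1 = 0 *)
Definition qinv (x : quat) : quat :=
  let n := qnorm2 x in
  Quat (qr x / n) (- qi x / n) (- qj x / n) (- qk x / n).
Definition qeq0 (x : quat) : bool :=
  [&& qr x == 0, qi x == 0, qj x == 0 & qk x == 0].

(* extended quaternions: None is the point at infinity *)
Definition hext := option quat.

(* invertibility of [[a,b],[c,d]] in GL(2,H): two-sided inverse matrix *)
Definition GL2 (a b c d : quat) : Prop :=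
  exists a' b' c' d' : quat,
    [/\ qadd (qmul a a') (qmul b c') = q1, qadd (qmul a b') (qmul b d') = q0,
        qadd (qmul c a') (qmul d c') = q0 & qadd (qmul c b') (qmul d d') = q1 ] /\
    [/\ qadd (qmul a' a) (qmul b' c) = q1, qadd (qmul a' b) (qmul b' d) = q0,
        qadd (qmul c' a) (qmul d' c) = q0 & qadd (qmul c' b) (qmul d' d) = q1 ].

(* q |-> (a q + b)(c q + d)^-1 on H ∪ {oo}, extended by continuity *)
Definition flt (a b c d : quat) (x : hext) : hext :=
  match x with
  | Some q => let den := qadd (qmul c q) d in
              if qeq0 den then None else Some (qmul (qadd (qmul a q) b) (qinv den))
  | None => if qeq0 c then None else Some (qmul a (qinv c))
  end.

Definition crfin (x1 x2 x3 x4 : quat) : quat :=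
  qmul (qmul (qmul (qinv (qsub x2 x1)) (qsub x4 x1)) (qinv (qsub x4 x3))) (qsub x2 x3).

(* cross-ratio on H ∪ {oo}; values at oo are limits.
   The value on non-distinct arguments with two oo's is irrelevant (0). *)
Definition cr (x1 x2 x3 x4 : hext) : quat :=
  match x1, x2, x3, x4 with
  | Some a, Some b, Some c, Some d => crfin a b c d
  | None, Some b, Some c, Some d => qmul (qinv (qsub d c)) (qsub b c)
  | Some a, None, Some c, Some d => qmul (qsub d a) (qinv (qsub d c))
  | Some a, Some b, None, Some d => qmul (qinv (qsub b a)) (qsub d a)
  | Some a, Some b, Some c, None => qmul (qinv (qsub b a)) (qsub b c)
  | _, _, _, _ => q0
  end.

End Quat.

Definition i5_0 : 'I_5 := @Ordinal 5 0 isT.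
Definition i5_1 : 'I_5 := @Ordinal 5 1 isT.
Definition i5_2 : 'I_5 := @Ordinal 5 2 isT.
Definition i5_3 : 'I_5 := @Ordinal 5 3 isT.
Definition i5_4 : 'I_5 := @Ordinal 5 4 isT.

From mathcomp Require Import all_boot all_order all_algebra.
From mathcomp Require Import reals.
From HB Require Import structures.
From mathcomp Require Import ring lra.
Set Implicit Arguments. Unset Strict Implicit. Unset Printing Implicit Defensive.
Import Order.TTheory GRing.Theory Num.Theory.
Local Open Scope ring_scope.
Set Bullet Behavior "Strict Subproofs".

(* In homogeneous coordinates fractional linear maps compose like matrices.
   If T maps finite points to finite points, then
   [Q(T q1, T q2, T q3, T q4) = r Q(q1, q2, q3, q4) r^-1] with [r = c q2 + d],
   a factor that does not depend on q4; the chart [x |-> (x - p)^-1], for a p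
   avoided by all the points, moves everything to finite quaternions at the
   cost of another such conjugation.  Conversely, for three distinct points,
   three distinct images and any nonzero r there is a T realising them with
   factor r, and the cross-ratio with its first three (finite) arguments fixed
   is injective in the fourth, so the cross-ratio conditions force the images
   of the remaining points. *)

Section QuaternionMoebius.
Variable R : realType.
Local Notation H := (quat R).

(** * The division ring of quaternions *)

Definition quat_tuple (x : H) := (qr x, qi x, qj x, qk x).
Definition tuple_quat (t : R * R * R * R) : H := Quat t.1.1.1 t.1.1.2 t.1.2 t.2.
Lemma quat_tupleK : cancel quat_tuple tuple_quat. Proof. by case. Qed.
HB.instance Definition _ := Choice.copy H (can_type quat_tupleK).

Lemma quat_ext (x y : H) :
  qr x = qr y -> qi x = qi y -> qj x = qj y -> qk x = qk y -> x = y.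
Proof. by case: x => ????; case: y => ???? /= -> -> -> ->. Qed.

Ltac quat_ring :=
  repeat (hnf; intro); repeat match goal with x : quat _ |- _ => destruct x end;
  apply: quat_ext; rewrite /=; ring.

Lemma qaddA : associative (@qadd R). Proof. quat_ring. Qed.
Lemma qaddC : commutative (@qadd R). Proof. quat_ring. Qed.
Lemma qadd0 : left_id (q0 R) (@qadd R). Proof. quat_ring. Qed.
Lemma qaddN : left_inverse (q0 R) (@qopp R) (@qadd R). Proof. quat_ring. Qed.
HB.instance Definition _ := GRing.isZmodule.Build H qaddA qaddC qadd0 qaddN.

Lemma qmulA : associative (@qmul R). Proof. quat_ring. Qed.
Lemma qmul1 : left_id (q1 R) (@qmul R). Proof. quat_ring. Qed.
Lemma qmulr1 : right_id (q1 R) (@qmul R). Proof. quat_ring. Qed.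
Lemma qmulDl : left_distributive (@qmul R) (@qadd R). Proof. quat_ring. Qed.
Lemma qmulDr : right_distributive (@qmul R) (@qadd R). Proof. quat_ring. Qed.
Lemma q1_neq0 : q1 R != q0 R. Proof. by apply/eqP => -[] /eqP; rewrite oner_eq0. Qed.
HB.instance Definition _ :=
  GRing.Zmodule_isNzRing.Build H qmulA qmul1 qmulr1 qmulDl qmulDr q1_neq0.

Lemma qnorm2_eq0 (x : H) : (qnorm2 x == 0) = (x == 0).
Proof.
case: x => a b c d; rewrite /qnorm2 /= !paddr_eq0 ?addr_ge0 ?sqr_ge0 // !sqrf_eq0.
apply/idP/eqP => [/andP[/andP[/andP[/eqP-> /eqP->] /eqP->] /eqP->] | [-> -> -> ->]] //.
by rewrite !eqxx.
Qed.

Definition quat_unit := [pred x : H | x != 0].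

Lemma qmulV : {in quat_unit, left_inverse 1 (@qinv R) *%R}.
Proof.
case=> a b c d; rewrite inE -qnorm2_eq0 /qnorm2 /= => n_neq0.
by apply: quat_ext; rewrite /= /qnorm2 /=; field.
Qed.

Lemma qmulVr : {in quat_unit, right_inverse 1 (@qinv R) *%R}.
Proof.
case=> a b c d; rewrite inE -qnorm2_eq0 /qnorm2 /= => n_neq0.
by apply: quat_ext; rewrite /= /qnorm2 /=; field.
Qed.

Lemma quat_unitP (x y : H) : y * x = 1 /\ x * y = 1 -> quat_unit x.
Proof.
by case=> yx1 _; rewrite inE; apply: contra_eqN yx1 => /eqP->; rewrite mulr0 eq_sym oner_eq0.
Qed.

Lemma qinv0 : {in [predC quat_unit], (@qinv R) =1 id}.
Proof.
move=> x; rewrite !inE negbK => /eqP->; apply: quat_ext;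
by rewrite /= /qnorm2 /= expr0n /= !addr0 ?oppr0 ?mul0r.
Qed.
HB.instance Definition _ :=
  GRing.NzRing_hasMulInverse.Build H qmulV qmulVr quat_unitP qinv0.

Lemma quat_unitE (x : H) : (x \is a GRing.unit) = (x != 0). Proof. by []. Qed.

Lemma qeq0E (x : H) : qeq0 x = (x == 0).
Proof.
case: x => a b c d; rewrite /qeq0 /=.
by apply/idP/eqP => [/and4P[/eqP-> /eqP-> /eqP-> /eqP->] | [-> -> -> ->]] //; rewrite !eqxx.
Qed.

Lemma quat_mulf_eq0 (x y : H) : (x * y == 0) = (x == 0) || (y == 0).
Proof.
have [->|x_neq0] := eqVneq x 0; first by rewrite mul0r eqxx.
by rewrite /= -[LHS]negbK -[RHS]negbK -!quat_unitE unitrMr.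
Qed.


(** * Quaternionic 2x2 matrices acting on the extended quaternions *)

Record m2 := M2 { ma : H; mb : H; mc : H; md : H }.

Definition fltm (M : m2) := flt (ma M) (mb M) (mc M) (md M).
Definition GL2m (M : m2) := GL2 (ma M) (mb M) (mc M) (md M).
Definition m2mul (M N : m2) :=
  M2 (ma M * ma N + mb M * mc N) (ma M * mb N + mb M * md N)
     (mc M * ma N + md M * mc N) (mc M * mb N + md M * md N).
Definition m2one := M2 1 0 0 1.

Lemma m2_ext (M N : m2) :
  ma M = ma N -> mb M = mb N -> mc M = mc N -> md M = md N -> M = N.
Proof. by case: M => ????; case: N => ???? /= -> -> -> ->. Qed.

Ltac m2_ring :=
  repeat (hnf; intro); repeat match goal with M : m2 |- _ => destruct M end;
  apply: m2_ext; quat_ring.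

Lemma GL2mP (M : m2) : GL2m M <-> exists N, m2mul M N = m2one /\ m2mul N M = m2one.
Proof.
split=> [[a' [b' [c' [d' [[? ? ? ?] [? ? ? ?]]]]]] | [[a' b' c' d'] [h1 h2]]].
  by exists (M2 a' b' c' d'); split; apply: m2_ext.
by exists a', b', c', d'; split; split;
  [ exact: (congr1 ma h1) | exact: (congr1 mb h1) | exact: (congr1 mc h1) | exact: (congr1 md h1)
  | exact: (congr1 ma h2) | exact: (congr1 mb h2) | exact: (congr1 mc h2) | exact: (congr1 md h2)].
Qed.

Lemma m2mulA : associative m2mul. Proof. m2_ring. Qed.
Lemma m2mulm1 : right_id m2one m2mul. Proof. m2_ring. Qed.

Lemma GL2mM (M N : m2) : GL2m M -> GL2m N -> GL2m (m2mul M N).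
Proof.
move=> /GL2mP[M' [MM' M'M]] /GL2mP[N' [NN' N'N]]; apply/GL2mP; exists (m2mul N' M').
by rewrite !m2mulA -(m2mulA M) -(m2mulA N') NN' M'M !m2mulm1 MM' N'N.
Qed.

Definition hvec (x : hext R) : H * H := if x is Some q then (q, 1) else (1, 0).
Definition hproj (w : H * H) : hext R :=
  if w.2 == 0 then None else Some (w.1 * w.2^-1).
Definition m2act (M : m2) (w : H * H) :=
  (ma M * w.1 + mb M * w.2, mc M * w.1 + md M * w.2).
Definition rscale (w : H * H) (l : H) := (w.1 * l, w.2 * l).

Lemma fltmE (M : m2) (x : hext R) : fltm M x = hproj (m2act M (hvec x)).
Proof.
by case: M => a b c d; case: x => [x|]; rewrite /fltm /hproj /= qeq0E ?mulr1 ?mulr0 ?addr0.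
Qed.

Lemma m2actM (M N : m2) (w : H * H) : m2act M (m2act N w) = m2act (m2mul M N) w.
Proof. by case: w => u v; congr pair; rewrite /= !mulrDr !mulrDl !mulrA addrACA. Qed.

Lemma m2act1 (w : H * H) : m2act m2one w = w.
Proof. by case: w => u v; rewrite /m2act /= !mul1r !mul0r addr0 add0r. Qed.

Lemma m2act_rscale (M : m2) (w : H * H) (l : H) :
  m2act M (rscale w l) = rscale (m2act M w) l.
Proof. by rewrite /m2act /rscale /= !mulrA -!mulrDl. Qed.

Lemma hproj_rscale (w : H * H) (l : H) : l != 0 -> hproj (rscale w l) = hproj w.
Proof.
move=> l_neq0; rewrite /hproj /= quat_mulf_eq0 (negbTE l_neq0) orbF.
by case: ifPn => // w2_neq0; rewrite invrM // mulrA mulrK.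
Qed.

Lemma hvec_hproj (w : H * H) : w != (0, 0) -> exists2 l, l != 0 & hvec (hproj w) = rscale w l.
Proof.
case: w => u v /= w_neq0; rewrite /hproj /=; have [v0|v_neq0] := eqVneq v 0.
  have u_neq0 : u != 0 by apply: contra w_neq0 => /eqP->; rewrite v0.
  by exists u^-1; rewrite ?invr_eq0 // /rscale v0 mulrV ?mul0r.
by exists v^-1; rewrite ?invr_eq0 // /rscale /= mulrV.
Qed.

Lemma hvec_neq0 (x : hext R) : hvec x != (0, 0).
Proof. by case: x => [x|] /=; rewrite xpair_eqE oner_eq0 ?andbF. Qed.

Lemma m2act_neq0 (N : m2) (w : H * H) : GL2m N -> w != (0, 0) -> m2act N w != (0, 0).
Proof.
move=> /GL2mP[N' [_ N'N]] w_neq0; apply: contra w_neq0 => /eqP Nw0.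
by rewrite -(m2act1 w) -N'N -m2actM Nw0 /m2act /= !mulr0 addr0.
Qed.

Lemma fltmM (M N : m2) (x : hext R) : GL2m N -> fltm M (fltm N x) = fltm (m2mul M N) x.
Proof.
move=> GL2N; rewrite !fltmE.
have [l l_neq0 ->] := hvec_hproj (m2act_neq0 GL2N (hvec_neq0 x)).
by rewrite m2act_rscale hproj_rscale // m2actM.
Qed.

Lemma fltm1 (x : hext R) : fltm m2one x = x.
Proof. by rewrite fltmE m2act1; case: x => [x|]; rewrite /hproj /= ?oner_eq0 ?divr1 ?eqxx. Qed.

Lemma GL2m_inv (M : m2) : GL2m M -> exists2 N, GL2m N & forall x, fltm N (fltm M x) = x.
Proof.
move=> GL2M; have [N [MN NM]] := (GL2mP M).1 GL2M.
by exists N => [|x]; [apply/GL2mP; exists M | rewrite fltmM // NM fltm1].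
Qed.

Lemma fltm_inj (M : m2) : GL2m M -> injective (fltm M).
Proof. by move=> /GL2m_inv[N _ NM] x y Mxy; rewrite -(NM x) Mxy NM. Qed.


(** * Cross-ratios under a fractional linear transformation *)

Definition conjby (a x : H) := a * x * a^-1.

Lemma cr_fin (x1 x2 x3 x4 : H) :
  cr (Some x1) (Some x2) (Some x3) (Some x4)
  = (x2 - x1)^-1 * (x4 - x1) * (x4 - x3)^-1 * (x2 - x3).
Proof. by []. Qed.
Lemma cr_inf4 (x1 x2 x3 : H) : cr (Some x1) (Some x2) (Some x3) None = (x2 - x1)^-1 * (x2 - x3).
Proof. by []. Qed.

Definition rfac (M : m2) (x : H) := mc M * x + md M.
Definition lfac (M : m2) (X : H) := ma M - X * mc M.

Lemma fltm_SomeE (M : m2) (x : H) : fltm M (Some x)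
  = if rfac M x == 0 then None else Some ((ma M * x + mb M) * (rfac M x)^-1).
Proof. by rewrite /fltm /= qeq0E. Qed.

Lemma fltm_SomeP (M : m2) (x X : H) :
  fltm M (Some x) = Some X <-> rfac M x != 0 /\ X * rfac M x = ma M * x + mb M.
Proof.
rewrite fltm_SomeE; have [-> | rx_neq0] := eqVneq (rfac M x) 0; first by split=> // -[].
by split=> [[<-] | [_ <-]]; [rewrite mulrVK | rewrite mulrK].
Qed.

Lemma fltm_None (M : m2) (x : H) : fltm M (Some x) = None -> rfac M x = 0.
Proof. by rewrite fltm_SomeE; case: eqP. Qed.

Lemma lfac_mulB (M : m2) (x y Y : H) : Y * rfac M y = ma M * y + mb M ->
  lfac M Y * (x - y) = ma M * x + mb M - Y * rfac M x.
Proof.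
case: M => a b c d; rewrite /lfac /rfac /= => Yy.
have -> : b = Y * (c * y + d) - a * y by rewrite Yy addrC addKr.
quat_ring.
Qed.

(* Commutatively [lfac M Y = (a d - b c) / (c y + d)], and this is the familiar
   [X - Y = (a d - b c) (x - y) / ((c x + d) (c y + d))]. *)
Lemma fltm_sub (M : m2) (x y X Y : H) :
  X * rfac M x = ma M * x + mb M -> Y * rfac M y = ma M * y + mb M -> rfac M x != 0 ->
  X - Y = lfac M Y * (x - y) * (rfac M x)^-1.
Proof. by move=> Xx Yy rx_neq0; rewrite (lfac_mulB x Yy) -Xx -mulrBl mulrK. Qed.

Lemma cr_factor_conj (l1 l3 r2 r4 d21 d41 d43 d23 : H) :
  l1 != 0 -> l3 != 0 -> r2 != 0 -> r4 != 0 -> d21 != 0 -> d43 != 0 ->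
  (l1 * d21 * r2^-1)^-1 * (l1 * d41 * r4^-1) * (l3 * d43 * r4^-1)^-1 * (l3 * d23 * r2^-1)
  = conjby r2 (d21^-1 * d41 * d43^-1 * d23).
Proof.
by move=> *; rewrite /conjby !invrM ?unitrMl ?unitrV ?invrK // !mulrA !mulrVK.
Qed.

Lemma cr_fltm (M : m2) (x1 x2 x3 x4 X1 X2 X3 : H) (z4 : hext R) :
  fltm M (Some x1) = Some X1 -> fltm M (Some x2) = Some X2 -> fltm M (Some x3) = Some X3 ->
  fltm M (Some x4) = z4 -> x2 != x1 -> x4 != x3 -> X2 != X1 -> X2 != X3 ->
  cr (Some X1) (Some X2) (Some X3) z4
  = conjby (rfac M x2) (cr (Some x1) (Some x2) (Some x3) (Some x4)).
Proof.
move=> /fltm_SomeP[r1 e1] /fltm_SomeP[r2 e2] /fltm_SomeP[r3 e3] e4 x21 x43 X21 X23.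
rewrite -subr_eq0 in x21; rewrite -subr_eq0 in x43.
have d21 := fltm_sub e2 e1 r2; have d23 := fltm_sub e2 e3 r2.
have lfac_neq0 L D : L * D * (rfac M x2)^-1 != 0 -> L != 0.
  by apply: contra => /eqP->; rewrite !mul0r.
have l1 : lfac M X1 != 0 by apply: (lfac_neq0 _ (x2 - x1)); rewrite -d21 subr_eq0.
have l3 : lfac M X3 != 0 by apply: (lfac_neq0 _ (x2 - x3)); rewrite -d23 subr_eq0.
rewrite !cr_fin; case: z4 e4 => [X4|] e4.
  have [r4 e4'] := (fltm_SomeP _ _ _).1 e4.
  by rewrite cr_fin d21 d23 (fltm_sub e4' e1 r4) (fltm_sub e4' e3 r4) cr_factor_conj.
have r4 := fltm_None e4.
have l3_eq : lfac M X3 = lfac M X1 * (x4 - x1) * (x4 - x3)^-1.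
  apply: (@mulIr _ (x4 - x3)) => //.
  by rewrite mulrVK // (lfac_mulB x4 e3) (lfac_mulB x4 e1) r4 !mulr0.
rewrite cr_inf4 d21 d23 l3_eq /conjby !invrM ?unitrMl ?unitrV ?invrK ?quat_unitE //.
by rewrite !mulrA mulrVK.
Qed.


(** * A chart sending all but one point to finite quaternions *)

Definition chart (p : H) := M2 0 1 1 (- p).
Definition chartv (p : H) (x : hext R) : H := if x is Some q then (q - p)^-1 else 0.
Definition chart_l (p : H) (x : hext R) : H := if x is Some q then - (q - p)^-1 else 1.
Definition chart_r (p : H) (x : hext R) : H := if x is Some q then q - p else 1.
Definition hdiff (x y : hext R) : H :=
  match x, y with Some a, Some b => a - b | _, _ => 1 end.

Lemma GL2m_chart (p : H) : GL2m (chart p).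
Proof. by apply/GL2mP; exists (M2 p 1 1 0); split; m2_ring. Qed.

Lemma fltm_chart (p : H) (x : hext R) : x != Some p -> fltm (chart p) x = Some (chartv p x).
Proof.
case: x => [x|] x_neq_p; rewrite fltmE /hproj /=.
- have {}x_neq_p : x != p by apply: contra_neq x_neq_p => ->.
  by rewrite !(mul0r, mul1r, mulr1, add0r) subr_eq0 (negbTE x_neq_p).
- by rewrite !(mul0r, mulr0, mulr1, add0r, addr0) oner_eq0.
Qed.

Lemma chart_l_neq0 (p : H) (x : hext R) : x != Some p -> chart_l p x != 0.
Proof. by case: x => [x|] /= x_neq_p; rewrite ?oner_eq0 // oppr_eq0 invr_eq0 subr_eq0. Qed.

Lemma chart_r_neq0 (p : H) (x : hext R) : x != Some p -> chart_r p x != 0.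
Proof. by case: x => [x|] /= x_neq_p; rewrite ?oner_eq0 // subr_eq0. Qed.

Lemma hdiff_neq0 (x y : hext R) : x != y -> hdiff x y != 0.
Proof. by case: x y => [x|] [y|] /= x_neq_y; rewrite ?oner_eq0 // subr_eq0. Qed.

Lemma chartvB (p : H) (x y : hext R) : x != Some p -> y != Some p -> x != y ->
  chartv p x - chartv p y = chart_l p y * hdiff x y * (chart_r p x)^-1.
Proof.
case: x y => [x|] [y|] //= x_neq_p y_neq_p _; rewrite ?invr1 ?mulr1 ?mul1r ?subr0 ?sub0r //.
have ux : x - p \is a GRing.unit by rewrite quat_unitE subr_eq0.
have uy : y - p \is a GRing.unit by rewrite quat_unitE subr_eq0.
have -> : x - y = (x - p) - (y - p) by rewrite opprB addrA subrK.
by rewrite mulrBr mulrBl mulrK // mulNr mulVr // mulN1r opprK addrC.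
Qed.

Lemma cr_hdiff (x1 x2 x3 x4 : hext R) : uniq [:: x1; x2; x3; x4] ->
  cr x1 x2 x3 x4 = (hdiff x2 x1)^-1 * hdiff x4 x1 * (hdiff x4 x3)^-1 * hdiff x2 x3.
Proof.
by case: x1 x2 x3 x4 => [?|] [?|] [?|] [?|]; rewrite /= ?inE ?eqxx ?orbT ?andbF //= => _;
  rewrite ?invr1 ?mulr1 ?mul1r.
Qed.

Lemma cr_chart (p : H) (x1 x2 x3 x4 : hext R) :
  uniq [:: x1; x2; x3; x4] -> Some p \notin [:: x1; x2; x3; x4] ->
  cr (Some (chartv p x1)) (Some (chartv p x2)) (Some (chartv p x3)) (Some (chartv p x4))
  = conjby (chart_r p x2) (cr x1 x2 x3 x4).
Proof.
move=> uniq_x; rewrite !inE !negb_or ![Some p == _]eq_sym => /and4P[px1 px2 px3 px4].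
move: (uniq_x) => /and4P[]; rewrite !inE !negb_or.
move=> /and3P[x12 _ x14] /andP[x23 _] x34 _.
have [x21 x41 x43] : [/\ x2 != x1, x4 != x1 & x4 != x3] by rewrite ![x4 == _]eq_sym eq_sym.
rewrite cr_fin cr_hdiff // !chartvB //.
by rewrite cr_factor_conj ?chart_l_neq0 ?chart_r_neq0 ?hdiff_neq0.
Qed.


(** * Three points and the normalising factor determine the transformation *)

Definition trans_m2 (t : H) := M2 1 t 0 1.
Definition inv_m2 := M2 0 1 1 0.
Definition aff_m2 (b g h : H) := M2 b g 0 h.

Lemma GL2m_trans (t : H) : GL2m (trans_m2 t).
Proof. by apply/GL2mP; exists (trans_m2 (- t)); split; m2_ring. Qed.

Lemma GL2m_inv_m2 : GL2m inv_m2.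
Proof. by apply/GL2mP; exists inv_m2; split; m2_ring. Qed.

Lemma GL2m_aff (b g h : H) : b != 0 -> h != 0 -> GL2m (aff_m2 b g h).
Proof.
move=> b_neq0 h_neq0; apply/GL2mP; exists (M2 b^-1 (- (b^-1 * g * h^-1)) 0 h^-1).
split; apply: m2_ext; rewrite /= ?mulr0 ?mul0r ?addr0 ?add0r ?mulrV ?mulVr //.
- by rewrite mulrN !mulrA mulrV // mul1r addNr.
- by rewrite mulNr mulrVK // addrN.
Qed.

(* x |-> y2' + ((b (x - y2)^-1 + g) h^-1)^-1 *)
Definition three_m2 (y2 y2' b g h : H) :=
  M2 (h + y2' * g) (- (h * y2) + y2' * (b - g * y2)) g (b - g * y2).

Lemma three_m2E (y2 y2' b g h : H) : three_m2 y2 y2' b g h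
  = m2mul (trans_m2 y2') (m2mul inv_m2 (m2mul (aff_m2 b g h) (m2mul inv_m2 (trans_m2 (- y2))))).
Proof. by apply: m2_ext; rewrite /= !(mul0r, mulr0, mul1r, mulr1, add0r, addr0) ?mulrN. Qed.

Lemma GL2m_three (y2 y2' b g h : H) : b != 0 -> h != 0 -> GL2m (three_m2 y2 y2' b g h).
Proof.
move=> b_neq0 h_neq0; rewrite three_m2E.
apply: GL2mM; first exact: GL2m_trans.
apply: GL2mM; first exact: GL2m_inv_m2.
apply: GL2mM; first exact: GL2m_aff.
by apply: GL2mM; [exact: GL2m_inv_m2 | exact: GL2m_trans].
Qed.

Lemma rfac_three (y2 y2' b g h y : H) : rfac (three_m2 y2 y2' b g h) y = g * (y - y2) + b.
Proof. rewrite /rfac /=; quat_ring. Qed.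

Lemma fltm_three_centre (y2 y2' b g h : H) :
  b != 0 -> fltm (three_m2 y2 y2' b g h) (Some y2) = Some y2'.
Proof.
move=> b_neq0; apply/fltm_SomeP; rewrite rfac_three subrr mulr0 add0r.
by split=> //=; quat_ring.
Qed.

Lemma fltm_three (y2 y2' b g h y y' : H) : b != 0 -> h != 0 -> y != y2 -> y' != y2' ->
  g + b * (y - y2)^-1 * h = (y' - y2')^-1 ->
  fltm (three_m2 y2 y2' b (g * h^-1) h^-1) (Some y) = Some y'.
Proof.
move=> b_neq0 h_neq0; rewrite -subr_eq0 => u_neq0; rewrite -subr_eq0 => w_neq0 e.
set M := three_m2 _ _ _ _ _.
have rfacM : rfac M y = (y' - y2')^-1 * h^-1 * (y - y2).
  by rewrite rfac_three -e !mulrDl mulrK // mulrVK.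
apply/fltm_SomeP; split.
  by rewrite rfacM !quat_mulf_eq0 !invr_eq0 !negb_or u_neq0 w_neq0 h_neq0.
have -> : ma M * y + mb M = h^-1 * (y - y2) + y2' * rfac M y.
  by rewrite rfac_three /=; quat_ring.
by rewrite -[y' in LHS](subrK y2') mulrDl rfacM !mulrA mulrV // mul1r.
Qed.

Lemma uniq3 (T : eqType) (a b c : T) : uniq [:: a; b; c] = [&& a != b, a != c & b != c].
Proof. by rewrite /= !inE !negb_or andbT andbA. Qed.

Lemma exists_fltm3 (y1 y2 y3 y1' y2' y3' b : H) :
  uniq [:: y1; y2; y3] -> uniq [:: y1'; y2'; y3'] -> b != 0 ->
  exists M, [/\ GL2m M, fltm M (Some y1) = Some y1', fltm M (Some y2) = Some y2',
                fltm M (Some y3) = Some y3' & rfac M y2 = b].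
Proof.
rewrite !uniq3 => /and3P[y12 y13 y23] /and3P[y12' y13' y23'] b_neq0.
set v1 := (y1 - y2)^-1; set v3 := (y3 - y2)^-1.
set w1 := (y1' - y2')^-1; set w3 := (y3' - y2')^-1.
have inv_subr_neq (x y z : H) : x != z -> (x - y)^-1 - (z - y)^-1 != 0.
  by move=> xz; rewrite subr_eq0; apply: contra xz => /eqP/invr_inj/addIr/eqP.
have v13 : v1 - v3 != 0 := inv_subr_neq _ _ _ y13.
have w13 : w1 - w3 != 0 := inv_subr_neq _ _ _ y13'.
(* In the coordinates [(x - y2)^-1] and [(x' - y2')^-1] the transformation
   is [u |-> g + b u h] (see [fltm_three]); [h] and [g] make it send [v1] to
   [w1] and [v3] to [w3]. *)
set h := (v1 - v3)^-1 * b^-1 * (w1 - w3).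
have h_neq0 : h != 0 by rewrite !quat_mulf_eq0 !invr_eq0 !negb_or b_neq0 v13 w13.
set g := w1 - b * v1 * h.
exists (three_m2 y2 y2' b (g * h^-1) h^-1); split.
- by apply: GL2m_three; rewrite ?invr_eq0.
- by apply: fltm_three; rewrite // 1?eq_sym // /g subrK.
- exact: fltm_three_centre.
- apply: fltm_three; rewrite // 1?eq_sym // -/v3 -/w3.
  have E : b * v1 * h - b * v3 * h = w1 - w3.
    by rewrite -mulrBl -mulrBr /h !mulrA mulrK // mulrV // mul1r.
  have -> : w3 = w1 - (b * v1 * h - b * v3 * h) by rewrite E opprB addrC subrK.
  by rewrite /g opprB addrA addrAC.
- by rewrite rfac_three subrr mulr0 add0r.
Qed.

Lemma cr_chartv4 (y1 y2 y3 : H) (z : hext R) : z != Some y3 ->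
  cr (Some y1) (Some y2) (Some y3) z
  = (y2 - y1)^-1 * (1 + (y3 - y1) * chartv y3 z) * (y2 - y3).
Proof.
case: z => [z|] z_neq_y3; last by rewrite cr_inf4 /= mulr0 addr0 mulr1.
have u : z - y3 \is a GRing.unit by rewrite quat_unitE subr_eq0.
rewrite cr_fin /= -(mulrA _ (z - y1)).
have -> : z - y1 = (z - y3) + (y3 - y1) by rewrite addrA subrK.
by rewrite mulrDl mulrV.
Qed.

Lemma cr_inj4 (y1 y2 y3 w : H) (z : hext R) : uniq [:: y1; y2; y3] ->
  Some w != Some y3 -> z != Some y3 ->
  cr (Some y1) (Some y2) (Some y3) z = cr (Some y1) (Some y2) (Some y3) (Some w) -> z = Some w.
Proof.
rewrite uniq3 => /and3P[y12 y13 y23] w_neq_y3 z_neq_y3.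
rewrite !cr_chartv4 // => /mulIr; rewrite quat_unitE subr_eq0 => /(_ y23).
move/mulrI; rewrite quat_unitE invr_eq0 subr_eq0 eq_sym => /(_ y12) /addrI.
move/mulrI; rewrite quat_unitE subr_eq0 eq_sym => /(_ y13) e.
apply: (fltm_inj (GL2m_chart y3)); by rewrite !fltm_chart // e.
Qed.


Lemma conjbyM (a b x : H) : a != 0 -> b != 0 -> conjby (a * b) x = conjby a (conjby b x).
Proof. by move=> a_neq0 b_neq0; rewrite /conjby invrM // !mulrA. Qed.

Lemma conjbyK (a : H) : a != 0 -> cancel (conjby a) (conjby a^-1).
Proof. by move=> a_neq0 x; rewrite /conjby invrK !mulrA mulVr // mul1r mulrVK. Qed.

Lemma exists_avoid (I : finType) (f : I -> hext R) : exists p : H, forall n, f n != Some p.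
Proof.
pose re n := if f n is Some x then qr x else 0.
pose t := 1 + \sum_n `|re n|.
exists (Quat t 0 0 0) => n; apply/eqP => fn_p.
have re_t : re n = t by rewrite /re fn_p.
have re_le : `|re n| <= \sum_i `|re i| by rewrite (bigD1 n) //= lerDl sumr_ge0.
by move: (ler_norm (re n)); rewrite re_t /t in re_le *; lra.
Qed.

Section Families.
Variables (I : finType) (i1 i2 i3 : I).
Hypothesis uniq_i : uniq [:: i1; i2; i3].

Definition flt_related (f g : I -> hext R) :=
  exists2 M, GL2m M & forall n, fltm M (f n) = g n.

Definition cr_at (f : I -> hext R) (k : I) := cr (f i1) (f i2) (f i3) (f k).

Definition cr_related (f g : I -> hext R) :=
  exists2 a, a != 0 & forall k, k \notin [:: i1; i2; i3] -> cr_at g k = conjby a (cr_at f k).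

Lemma uniq_rcons_base (k : I) : k \notin [:: i1; i2; i3] -> uniq [:: i1; i2; i3; k].
Proof. by move=> k_out; rewrite -[[:: _; _; _; _]]/(rcons [:: i1; i2; i3] k) rcons_uniq k_out. Qed.

Lemma flt_related_transport (P P' : m2) (f g f' g' : I -> hext R) :
  GL2m P -> GL2m P' -> (forall n, fltm P (f n) = f' n) -> (forall n, fltm P' (g n) = g' n) ->
  flt_related f g <-> flt_related f' g'.
Proof.
move=> GL2P GL2P' Pf P'g.
have [N GL2N NP] := GL2m_inv GL2P; have [N' GL2N' N'P'] := GL2m_inv GL2P'.
split=> -[M GL2M Mf].
  exists (m2mul P' (m2mul M N)) => [|n]; first by apply: GL2mM => //; apply: GL2mM.
  rewrite -fltmM; last exact: GL2mM.
  by rewrite -fltmM // -Pf NP Mf P'g.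
exists (m2mul N' (m2mul M P)) => [|n]; first by apply: GL2mM => //; apply: GL2mM.
rewrite -fltmM; last exact: GL2mM.
by rewrite -fltmM // Pf Mf -P'g N'P'.
Qed.

Lemma cr_related_conj (f g f' g' : I -> hext R) (s s' : H) : s != 0 -> s' != 0 ->
  (forall k, k \notin [:: i1; i2; i3] -> cr_at f' k = conjby s (cr_at f k)) ->
  (forall k, k \notin [:: i1; i2; i3] -> cr_at g' k = conjby s' (cr_at g k)) ->
  cr_related f g -> cr_related f' g'.
Proof.
move=> s_neq0 s'_neq0 ff' gg' [a a_neq0 fg].
have sV_neq0 : s^-1 != 0 by rewrite invr_eq0.
exists (s' * a * s^-1) => [|k k_out]; first by rewrite !quat_mulf_eq0 !negb_or s'_neq0 a_neq0.
rewrite gg' // fg // -(conjbyK s_neq0 (cr_at f k)) -ff' //.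
by rewrite !conjbyM ?quat_mulf_eq0 ?negb_or ?s'_neq0.
Qed.

Lemma cr_related_transport (f g f' g' : I -> hext R) (s s' : H) : s != 0 -> s' != 0 ->
  (forall k, k \notin [:: i1; i2; i3] -> cr_at f' k = conjby s (cr_at f k)) ->
  (forall k, k \notin [:: i1; i2; i3] -> cr_at g' k = conjby s' (cr_at g k)) ->
  cr_related f g <-> cr_related f' g'.
Proof.
move=> s_neq0 s'_neq0 ff' gg'; split; first exact: cr_related_conj ff' gg'.
apply: (cr_related_conj (s := s^-1) (s' := s'^-1)); rewrite ?invr_eq0 // => k k_out.
  by rewrite ff' // conjbyK.
by rewrite gg' // conjbyK.
Qed.

Lemma cr_at_chart (f : I -> hext R) (p : H) : injective f -> (forall n, f n != Some p) ->
  forall k, k \notin [:: i1; i2; i3] ->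
  cr_at (fun n => Some (chartv p (f n))) k = conjby (chart_r p (f i2)) (cr_at f k).
Proof.
move=> f_inj fp k k_out; apply: cr_chart.
  rewrite -[[:: f _; _; _; _]]/(map f [:: i1; i2; i3; k]) (map_inj_uniq f_inj).
  exact: uniq_rcons_base.
by rewrite !inE !negb_or ![Some p == _]eq_sym !fp.
Qed.

Lemma flt_related_iff_cr_related_fin (y y' : I -> H) : injective y -> injective y' ->
  flt_related (fun n => Some (y n)) (fun n => Some (y' n))
  <-> cr_related (fun n => Some (y n)) (fun n => Some (y' n)).
Proof.
move=> y_inj y'_inj; move: (uniq_i); rewrite uniq3 => /and3P[i12 i13 i23].
have neq (z : I -> H) : injective z -> forall m n, m != n -> z m != z n.
  by move=> z_inj m n; rewrite (inj_eq z_inj).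
split=> [[M GL2M My] | [a a_neq0 yy']].
  have [rM_neq0 _] := (fltm_SomeP _ _ _).1 (My i2).
  exists (rfac M (y i2)) => // k; rewrite !inE !negb_or => /and3P[_ _ k3].
  apply: cr_fltm; rewrite ?My ?neq // eq_sym ?neq //.
have uniq_y (z : I -> H) : injective z -> uniq [:: z i1; z i2; z i3].
  by move=> z_inj; rewrite -[[:: z _; _; _]]/(map z [:: i1; i2; i3]) (map_inj_uniq z_inj).
have [M [GL2M My1 My2 My3 rM]] := exists_fltm3 (uniq_y _ y_inj) (uniq_y _ y'_inj) a_neq0.
exists M => // n; have [|n_out] := boolP (n \in [:: i1; i2; i3]).
  by rewrite !inE => /or3P[] /eqP->.
move: (n_out); rewrite !inE !negb_or => /and3P[_ _ n3].
apply: (@cr_inj4 (y' i1) (y' i2) (y' i3)).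
- exact: uniq_y.
- by rewrite (inj_eq Some_inj) neq.
- by rewrite -My3 (inj_eq (fltm_inj GL2M)) (inj_eq Some_inj) neq.
- rewrite (cr_fltm My1 My2 My3 erefl) ?neq // 1?eq_sym ?neq // rM.
  by rewrite -(yy' n n_out).
Qed.

Theorem flt_related_iff_cr_related (f g : I -> hext R) : injective f -> injective g ->
  flt_related f g <-> cr_related f g.
Proof.
move=> f_inj g_inj; have [p fp] := exists_avoid f; have [p' gp'] := exists_avoid g.
have chart_inj (h : I -> hext R) q : injective h -> (forall n, h n != Some q) ->
    injective (fun n => chartv q (h n)).
  move=> h_inj hq m n e; apply/h_inj/(fltm_inj (GL2m_chart q)).
  by rewrite !fltm_chart // e.
apply: (iff_trans (flt_related_transport (GL2m_chart p) (GL2m_chart p')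
  (fun n => fltm_chart (fp n)) (fun n => fltm_chart (gp' n)))).
apply: (iff_trans _ (iff_sym (cr_related_transport _ _
  (cr_at_chart f_inj fp) (cr_at_chart g_inj gp')))); rewrite ?chart_r_neq0 //.
by apply: flt_related_iff_cr_related_fin; apply: chart_inj.
Qed.

End Families.

End QuaternionMoebius.

Lemma notin_I5_012 (k : 'I_5) : k \notin [:: i5_0; i5_1; i5_2] -> k = i5_3 \/ k = i5_4.
Proof. by case: k => [[|[|[|[|[|m]]]]] hk] //= _; [left | right]; apply: val_inj. Qed.

Theorem mainTheorem3 (R : realType) (q q' : 'I_5 -> hext R)
  (Hq : injective q) (Hq' : injective q') :
  (exists a b c d : quat R, GL2 a b c d /\ forall n : 'I_5, flt a b c d (q n) = q' n)
  <->
  (exists a : quat R, a <> q0 R /\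
     cr (q' i5_0) (q' i5_1) (q' i5_2) (q' i5_3)
       = qmul (qmul a (cr (q i5_0) (q i5_1) (q i5_2) (q i5_3))) (qinv a) /\
     cr (q' i5_0) (q' i5_1) (q' i5_2) (q' i5_4)
       = qmul (qmul a (cr (q i5_0) (q i5_1) (q i5_2) (q i5_4))) (qinv a)).
Proof.
have [to_cr of_cr] := flt_related_iff_cr_related (isT : uniq [:: i5_0; i5_1; i5_2]) Hq Hq'.
split=> [[a [b [c [d [GL2M Mq]]]]] | [a [/eqP a_neq0 [cr3 cr4]]]].
  have [s s_neq0 qq'] : cr_related i5_0 i5_1 i5_2 q q' by apply: to_cr; exists (M2 a b c d).
  by exists s; split; [apply/eqP | split; apply: qq'].
have [[a' b' c' d'] GL2M Mq] : flt_related q q'.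
  by apply: of_cr; exists a => // k /notin_I5_012[]->.
by exists a', b', c', d'.
Qed.
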